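(* Let $p$ be a prime and $D$ an integer with $1 \le D \le p-1$. Let $k\ge 1$ and let $A_1,\dots,A_k \subseteq \mathbb{Z}_p$ be $D$-APs. Then the sumset $\sum_{i=1}^k A_i$ is contiguous relative to $D$.
   Context: $\mathbb{Z}_p=\{0,\dots,p-1\}$ under addition mod $p$. Sumset: $\sum_{i=1}^k A_i = \{a_1+\dots+a_k \bmod p : a_i\in A_i\}$. For $b\in\{0,\dots,D-1\}$, the $D$-AP with base $b$ is $A_{(b)}=\{b+iD : i \text{ integer},\ 0\le i\le \lfloor (p-1-b)/D\rfloor\}\subseteq\mathbb{Z}_p$; a $D$-AP is any set of this form. For $g_0,g_1\in\mathbb{Z}_p$, $\mathrm{dist}_{p,D}(g_0,g_1)=\min\{(g_1-g_0)D^{-1}\bmod p,\ (g_0-g_1)D^{-1}\bmod p\}$, each term viewed as an integer in $\{0,\dots,p-1\}$. A set $A\subseteq\mathbb{Z}_p$ is contiguous relative to $D$ if its elements can be listed as $a_1,\dots,a_m$ (each element exactly once) with $\mathrm{dist}_{p,D}(a_j,a_{j+1})=1$ for all $1\le j<m$; a one-element set is contiguous. *)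

From HB Require Import structures.
From mathcomp Require Import all_boot all_order all_algebra.
Unset Printing Implicit Defensive.
Import GRing.Theory.
Local Open Scope ring_scope.

(* Z_p is modelled as 'Z_p (p prime, so p >= 2 and 'Z_p = Z/pZ with
   elements 0..p-1, addition mod p). *)

Definition sumset (p k : nat) (A : 'I_k -> {set 'Z_p}) : {set 'Z_p} :=
  [set x : 'Z_p | [exists a : {ffun 'I_k -> 'Z_p},
     [forall i, a i \in A i] && (x == \sum_(i < k) a i)]].

Definition DAP (p D b : nat) : {set 'Z_p} :=
  [set x : 'Z_p | [exists i : 'I_p,
     (i <= (p.-1 - b) %/ D)%N && (nat_of_ord x == b + i * D)%N]].

Definition isDAP (p D : nat) (A : {set 'Z_p}) : Prop :=
  exists b : nat, (b < D)%N /\ A = DAP p D b.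

Definition distpD (p D : nat) (g0 g1 : 'Z_p) : nat :=
  minn (nat_of_ord ((g1 - g0) * (D%:R)^-1))
       (nat_of_ord ((g0 - g1) * (D%:R)^-1)).

Definition contiguous (p D : nat) (A : {set 'Z_p}) : Prop :=
  exists s : seq 'Z_p,
    [/\ uniq s, (forall x, (x \in A) = (x \in s))
      & (forall j : nat, (j.+1 < size s)%N ->
           distpD p D (nth 0 s j) (nth 0 s j.+1) = 1%N)].

From mathcomp Require Import all_boot all_order all_algebra zify.

Set Implicit Arguments.
Unset Strict Implicit.
Import GRing.Theory.

Local Open Scope ring_scope.

(* Every D-AP is the image in Z_p of a progression {b + jD : j <= m} of
   naturals, and a sum of such progressions with common difference D is the
   progression {B + jD : j <= M}, B and M being the sums of the bases and of
   the lengths.  Since D is invertible mod p, the first min(p, M + 1) of the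
   points B + jD are distinct and exhaust the image, and consecutive ones
   differ by D, i.e. are at distance 1 relative to D. *)

Definition apset (p B D M : nat) : {set 'Z_p} :=
  [set ((B + j * D)%N%:R : 'Z_p) | j : 'I_M.+1].

Lemma apsetP (p B D M : nat) (x : 'Z_p) :
  reflect (exists2 j : nat, (j <= M)%N & x = (B + j * D)%N%:R)
          (x \in apset p B D M).
Proof.
apply: (iffP imsetP) => [[j _ ->]|[j jM ->]].
  by exists j => //; rewrite -ltnS ltn_ord.
by exists (Ordinal (jM : (j < M.+1)%N)).
Qed.

Lemma sumsetP (p k : nat) (A : 'I_k -> {set 'Z_p}) (x : 'Z_p) :
  reflect (exists2 a : 'I_k -> 'Z_p, forall i, a i \in A i & x = \sum_(i < k) a i)
          (x \in sumset p k A).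
Proof.
rewrite inE; apply: (iffP existsP) => [[a /andP[/forallP aA /eqP ->]]|[a aA ->]].
  by exists a.
exists [ffun i => a i]; apply/andP; split; first by apply/forallP => i; rewrite ffunE.
by apply/eqP; apply: eq_bigr => i _; rewrite ffunE.
Qed.

(* The greedy split: take as much as possible from each summand in turn. *)
Lemma sum_greedy_min (f : nat -> nat) (j n : nat) :
  (\sum_(i < n) minn (f i) (j - \sum_(i' < i) f i') = minn j (\sum_(i < n) f i))%N.
Proof.
elim: n => [|n IH]; first by rewrite !big_ord0 minn0.
by rewrite !big_ord_recr /= IH; move: (\sum_(i < n) f i)%N => S; lia.
Qed.

Lemma bounded_sum_split (k : nat) (m : 'I_k -> nat) (j : nat) :
  (j <= \sum_(i < k) m i)%N ->
  exists2 c : 'I_k -> nat, forall i, (c i <= m i)%N & (\sum_(i < k) c i)%N = j.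
Proof.
move=> jM; pose f n := oapp m 0%N (insub n).
have fE (i : 'I_k) : f i = m i by rewrite /f valK.
exists (fun i => minn (f i) (j - \sum_(i' < i) f i')) => [i|].
  by rewrite fE geq_minl.
by rewrite sum_greedy_min (eq_bigr m) => [|i _]; rewrite ?fE //; apply/minn_idPl.
Qed.

Lemma natr_sum_ap (R : pzSemiRingType) (k D : nat) (b c : 'I_k -> nat) :
  \sum_(i < k) ((b i + c i * D)%N%:R : R) =
  (\sum_(i < k) b i + (\sum_(i < k) c i) * D)%N%:R.
Proof. by rewrite -natr_sum big_split /= big_distrl. Qed.

Lemma sumset_apset (p D k : nat) (A : 'I_k -> {set 'Z_p}) (b m : 'I_k -> nat) :
  (forall i, A i = apset p (b i) D (m i)) ->
  sumset p k A = apset p (\sum_(i < k) b i) D (\sum_(i < k) m i).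
Proof.
move=> AE; apply/setP => x; apply/sumsetP/apsetP => [[a aA ->]|[j jM ->]].
  have /fin_all_exists2[c cm ac] :
      forall i, exists2 c, (c <= m i)%N & a i = (b i + c * D)%N%:R.
    by move=> i; apply/apsetP; rewrite -AE.
  exists (\sum_(i < k) c i)%N; first exact: leq_sum.
  by rewrite (eq_bigr _ (fun i _ => ac i)) natr_sum_ap.
have [c cm <-] := bounded_sum_split jM.
exists (fun i => (b i + c i * D)%N%:R); last by rewrite natr_sum_ap.
by move=> i; rewrite AE; apply/apsetP; exists (c i).
Qed.

Lemma DAP_apset (p D b : nat) :
  (1 < p)%N -> (0 < D)%N -> (b < p)%N ->
  DAP p D b = apset p b D ((p.-1 - b) %/ D).
Proof.
move=> p_gt1 D_gt0 bp; set q := ((p.-1 - b) %/ D)%N.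
have small j : (j <= q)%N -> (b + j * D < p)%N.
  move=> jq; have : (j * D <= q * D)%N by rewrite leq_mul2r jq orbT.
  have := leq_divM (p.-1 - b) D.
  lia.
have valE j : (j <= q)%N -> ((b + j * D)%N%:R : 'Z_p) = b + j * D :> nat.
  by move=> jq; rewrite val_Zp_nat // modn_small // small.
apply/setP => x; rewrite inE; apply/existsP/apsetP => [[i /andP[iq /eqP xE]]|[j jq ->]].
  by exists i => //; apply: val_inj; rewrite /= valE.
have jp : (j < p)%N by have := small j jq; have := leq_pmulr j D_gt0; lia.
by exists (Ordinal jp); rewrite valE // eqxx andbT.
Qed.

Section Progression.

Variables (p D : nat).
Hypotheses (p_prime : prime p) (p_ndvd_D : ~~ (p %| D)%N).

Let p_gt1 : (1 < p)%N := prime_gt1 p_prime.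

Let D_unit : (D%:R : 'Z_p) \is a GRing.unit.
Proof. by rewrite unitZpE // prime_coprime. Qed.

Lemma distpD_addD (x : 'Z_p) : distpD p D x (x + D%:R) = 1%N.
Proof.
rewrite /distpD addrAC subrr add0r opprD addrA subrr add0r mulNr mulrV //.
have val1 : nat_of_ord (1%R : 'Z_p) = 1%N.
  by have := val_Zp_nat p_gt1 1; rewrite modn_small.
have valN1 : (0 < nat_of_ord ((-1)%R : 'Z_p))%N.
  rewrite lt0n; apply: contra (oner_neq0 'Z_p) => /eqP N1_0.
  by rewrite -oppr_eq0; apply/eqP/val_inj.
by rewrite val1; apply/minn_idPl.
Qed.

Lemma ap_point_inj (B j1 j2 : nat) : (j1 < p)%N -> (j2 < p)%N ->
  ((B + j1 * D)%N%:R : 'Z_p) = (B + j2 * D)%N%:R -> j1 = j2.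
Proof.
move=> j1p j2p; rewrite !natrD !natrM => /addrI /(mulIr D_unit) /(congr1 val).
by rewrite /= !val_Zp_nat // !modn_small.
Qed.

Lemma apset_contiguous (B M : nat) : contiguous p D (apset p B D M).
Proof.
set n := minn p M.+1.
exists [seq ((B + j * D)%N%:R : 'Z_p) | j <- iota 0 n]; split.
- rewrite map_inj_in_uniq ?iota_uniq // => j1 j2.
  rewrite !mem_iota => /andP[_ j1n] /andP[_ j2n]; apply: ap_point_inj; lia.
- move=> x; apply/apsetP/mapP => [[j jM ->]|[j]].
    exists (j %% p)%N; last by rewrite !natrD !natrM Zp_nat_mod.
    rewrite mem_iota /=; have := ltn_pmod j (ltnW p_gt1); have := leq_mod j p; lia.
  by rewrite mem_iota => /andP[_ jn] ->; exists j => //; lia.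
- move=> j; rewrite size_map size_iota => jn.
  rewrite !(nth_map 0%N) ?size_iota ?nth_iota; try lia.
  by rewrite !add0n mulSnr addnA (natrD _ (B + j * D)) distpD_addD.
Qed.

End Progression.

Theorem lemma2p6 (p D k : nat) (A : 'I_k -> {set 'Z_p}) :
  prime p -> (1 <= D)%N -> (D <= p - 1)%N -> (1 <= k)%N ->
  (forall i, isDAP p D (A i)) ->
  contiguous p D (sumset p k A).
Proof.
move=> p_prime D_gt0 Dp _ A_DAP.
have p_gt1 := prime_gt1 p_prime.
have /fin_all_exists[b Ab] :
  forall i, exists b, (b < D)%N /\ A i = DAP p D b by exact: A_DAP.
rewrite (@sumset_apset p D k A b (fun i => (p.-1 - b i) %/ D)%N) => [|i].
  by apply: apset_contiguous => //; rewrite gtnNdvd //; lia.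
by have [bD ->] := Ab i; apply: DAP_apset => //; lia.
Qed.
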